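(* Let $A \in \mathbb{R}^{m \times n}$ and $b \in \mathbb{R}^m$ be such that $\mathcal{P} = \{x \in \mathbb{R}^n : Ax \geq b\}$ is a polytope. Let $G$ be a finite undirected graph whose vertices are pairs $u = (I, X)$ with $I \subset [m]$ and $X \in \mathbb{R}^{n \times (1+m)}$. Suppose that $G$ is nonempty and that for every vertex $u = (I,X)$ of $G$: (i) $\#I = n$; (ii) $A_I X = \tilde b_I$; (iii) $A X \geq_{\mathrm{lex}} \tilde b$; (iv) $u$ has exactly $n$ neighbors in $G$; (v) for every neighbor $u' = (I', X')$ of $u$ in $G$, $\#(I \cap I') = n-1$. Then the map $(I,X) \mapsto I$ is a graph isomorphism from $G$ onto the lex-graph $G_\mathrm{lex}$ of $(A,b)$.
   Context: Let $\tilde b := [\,b \;\; -\mathrm{Id}_m\,] \in \mathbb{R}^{m \times (1+m)}$. For row vectors $\alpha,\beta \in \mathbb{R}^{1+m}$, $\alpha \leq_{\mathrm{lex}} \beta$ means $\alpha = \beta$ or $\alpha_k < \beta_k$ at the first index $k$ where they differ; for matrices with $1+m$ columns, $X \geq_{\mathrm{lex}} Y$ means $X_i \geq_{\mathrm{lex}} Y_i$ for every row $i$. For $I \subset [m]$, $A_I$, $\tilde b_I$ are the submatrices of rows indexed by $I$. A lex-feasible basis is a set $I \subset [m]$ with $\#I = n$, $A_I$ nonsingular, and $X^I := A_I^{-1}\tilde b_I$ satisfying $A X^I \geq_{\mathrm{lex}} \tilde b$. The lex-graph $G_\mathrm{lex}$ has the lex-feasible bases as vertices, with an edge between $I$ and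 $I'$ iff $\#(I \cap I') = n-1$. *)

From HB Require Import structures.
From mathcomp Require Import all_boot all_order all_algebra.
From mathcomp Require Import reals.
Set Implicit Arguments. Unset Strict Implicit. Unset Printing Implicit Defensive.
Import Order.TTheory GRing.Theory Num.Theory.
Local Open Scope ring_scope.

Section Defs.
Variable R : realType.

Definition lexle {p : nat} (u v : 'rV[R]_p) : bool :=
  (u == v) ||
  [exists k : 'I_p,
     [forall j : 'I_p, (j < k)%N ==> (u 0 j == v 0 j)] && (u 0 k < v 0 k)].

Definition lexge_mx {q p : nat} (X Y : 'M[R]_(q, p)) : Prop :=
  forall i : 'I_q, lexle (row i Y) (row i X).

Definition btilde {m : nat} (b : 'cV[R]_m) : 'M[R]_(m, 1 + m) :=
  row_mx b (- 1%:M).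

Definition subrows {m p : nat} (I : {set 'I_m}) (M : 'M[R]_(m, p))
  : 'M[R]_(#|I|, p) :=
  \matrix_(i < #|I|) row (enum_val i) M.

Definition in_polyhedron {m n : nat} (A : 'M[R]_(m, n)) (b : 'cV[R]_m)
  (x : 'cV[R]_n) : Prop :=
  forall i : 'I_m, b i 0 <= (A *m x) i 0.

Definition is_polytope {m n : nat} (A : 'M[R]_(m, n)) (b : 'cV[R]_m) : Prop :=
  exists M : R, forall x : 'cV[R]_n, in_polyhedron A b x ->
    forall j : 'I_n, `|x j 0| <= M.

(* lex-feasible basis: #I = n, A_I nonsingular, X^I := A_I^{-1} b~_I
   satisfies A X^I >=_lex b~ *)
Definition lex_feasible {m n : nat} (A : 'M[R]_(m, n)) (b : 'cV[R]_m)
  (I : {set 'I_m}) : Prop :=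
  exists e : #|I| = n,
    let AI : 'M[R]_n := castmx (e, erefl n) (subrows I A) in
    let bI : 'M[R]_(n, 1 + m) := castmx (e, erefl (1 + m)%N) (subrows I (btilde b)) in
    AI \in unitmx /\ lexge_mx (A *m (invmx AI *m bI)) (btilde b).

(* edges of the lex-graph: #(I ∩ I') = n - 1 (as integers) *)
Definition lex_adj {m : nat} (n : nat) (I I' : {set 'I_m}) : Prop :=
  (#|I :&: I'|).+1 = n.

End Defs.

From HB Require Import structures.
From mathcomp Require Import all_boot all_order all_algebra.
From mathcomp Require Import reals.
From mathcomp Require Import lra.
Set Implicit Arguments. Unset Strict Implicit. Unset Printing Implicit Defensive.
Import Order.TTheory GRing.Theory Num.Theory.
Local Open Scope ring_scope.

(* A label (I, X) is a lex-feasible basis with X = X^I, since tightness on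
   I determines X.  The lexicographic perturbation makes every basis
   nondegenerate, so dropping a given i from I leads to at most one
   lex-feasible basis; hence a basis has at most n lex-neighbours, and the n
   neighbours of a vertex of G are all of them.  Finally, the lexicographic
   simplex method for the objective sum_(j in J) (A X - btilde b)_j moves
   along lex-edges towards any basis J (boundedness of P provides the
   pivots), so the image of G, being closed under lex-adjacency, contains
   every lex-feasible basis. *)

Section LexPos.
Variables (R : realFieldType) (p : nat).
Implicit Types u v w : 'rV[R]_p.

Definition lexpos w := [exists k : 'I_p,
  [forall j : 'I_p, (j < k)%N ==> (w 0 j == 0)] && (0 < w 0 k)].

Lemma lexposP w : reflect
  (exists k : 'I_p, (forall j : 'I_p, (j < k)%N -> w 0 j = 0) /\ 0 < w 0 k)
  (lexpos w).
Proof.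
apply: (iffP existsP) => [[k /andP[/forallP w0 wk]]|[k [w0 wk]]]; exists k.
  by split=> // j jk; apply/eqP; exact: (implyP (w0 j) jk).
by rewrite wk andbT; apply/forallP => j; apply/implyP => jk; rewrite w0.
Qed.

Lemma lexposD u v : lexpos u -> lexpos v -> lexpos (u + v).
Proof.
move=> /lexposP[k1 [u0 uk]] /lexposP[k2 [v0 vk]]; apply/lexposP.
case: (ltngtP k1 k2) => [lt12|lt21|/val_inj eq12].
- exists k1; split; last by rewrite mxE (v0 _ lt12) addr0.
  by move=> j jk; rewrite mxE u0 // v0 ?addr0 //; exact: ltn_trans lt12.
- exists k2; split; last by rewrite mxE (u0 _ lt21) add0r.
  by move=> j jk; rewrite mxE u0 ?v0 ?addr0 //; exact: ltn_trans lt21.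
- subst k2; exists k1; split; last by rewrite mxE addr_gt0.
  by move=> j jk; rewrite mxE u0 ?v0 ?addr0.
Qed.

Lemma lexposZ a u : 0 < a -> lexpos (a *: u) = lexpos u.
Proof.
have posZ c w : 0 < c -> lexpos w -> lexpos (c *: w).
  move=> c0 /lexposP[k [w0 wk]]; apply/lexposP; exists k.
  by split=> [j jk|]; rewrite mxE; [rewrite w0 ?mulr0 | rewrite mulr_gt0].
move=> a0; apply/idP/idP; last exact: posZ.
move/(posZ a^-1); rewrite invr_gt0 scalerA mulVf ?gt_eqF // scale1r.
exact.
Qed.

Lemma lexpos0 : ~~ lexpos 0.
Proof. by apply/lexposP => -[k [_]]; rewrite mxE ltxx. Qed.

Lemma lexposN u : lexpos u -> ~~ lexpos (- u).
Proof.
by move=> pu; apply/negP => /(lexposD pu); rewrite subrr (negbTE lexpos0).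
Qed.

Lemma lexpos_total u : u != 0 -> lexpos u || lexpos (- u).
Proof.
move=> u_neq0; have [j0 uj0] : exists j, u 0 j != 0.
  apply/existsP; apply: contraR u_neq0 => /existsPn u0.
  by apply/eqP/rowP => j; rewrite mxE; apply/eqP/negPn/u0.
case: (@arg_minnP _ j0 (fun j => u 0 j != 0) val uj0) => k uk kmin.
have u0 (j : 'I_p) : (j < k)%N -> u 0 j = 0.
  by move=> jk; apply/eqP/negPn/negP => /kmin; rewrite leqNgt jk.
case: (ltrgtP (u 0 k) 0) uk => // [uneg|upos] _; apply/orP; [right|left].
  apply/lexposP; exists k.
  by split=> [j jk|]; rewrite mxE; [rewrite u0 ?oppr0 | rewrite oppr_gt0].
by apply/lexposP; exists k.
Qed.

End LexPos.

Section LexOrder.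
Variables (R : realType) (p : nat).
Implicit Types u v w : 'rV[R]_p.

Lemma lexleE u v : lexle u v = (u == v) || lexpos (v - u).
Proof.
rewrite /lexle /lexpos; congr (_ || _); apply: eq_existsb => k.
rewrite !mxE subr_gt0; congr (_ && _); apply: eq_forallb => j.
by rewrite !mxE subr_eq0 eq_sym.
Qed.

Lemma lexge0E u : lexle 0 u = (u == 0) || lexpos u.
Proof. by rewrite lexleE subr0 eq_sym. Qed.

Lemma lexle_subr u v : lexle u v = lexle 0 (v - u).
Proof. by rewrite lexleE lexge0E subr_eq0 eq_sym. Qed.

Lemma lexpos_ge0 u : lexpos u -> lexle 0 u.
Proof. by rewrite lexge0E => ->; rewrite orbT. Qed.

Lemma lexge0_pos u : lexle 0 u -> u != 0 -> lexpos u.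
Proof. by rewrite lexge0E => /orP[/eqP->|//]; rewrite eqxx. Qed.

Lemma lexposD_ge0 u v : lexpos u -> lexle 0 v -> lexpos (u + v).
Proof. by rewrite lexge0E => pu /orP[/eqP->|/(lexposD pu)//]; rewrite addr0. Qed.

Lemma lexge0D u v : lexle 0 u -> lexle 0 v -> lexle 0 (u + v).
Proof.
rewrite [lexle 0 u]lexge0E => /orP[/eqP->|pu v0]; first by rewrite add0r.
exact/lexpos_ge0/lexposD_ge0.
Qed.

Lemma lexge0Z a u : 0 <= a -> lexle 0 u -> lexle 0 (a *: u).
Proof.
rewrite le0r !lexge0E => /orP[/eqP->|a0]; first by rewrite scale0r eqxx.
by rewrite lexposZ // scaler_eq0 (gt_eqF a0).
Qed.

Lemma lexge0_sum (I : finType) (P : pred I) (F : I -> 'rV[R]_p) :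
  (forall i, P i -> lexle 0 (F i)) -> lexle 0 (\sum_(i | P i) F i).
Proof.
by move=> F0; apply: (big_ind (lexle 0)) => //; [rewrite lexge0E eqxx | exact: lexge0D].
Qed.

Lemma lexposN_ge0 u : lexpos u -> ~~ lexle 0 (- u).
Proof.
move=> pu; rewrite lexge0E oppr_eq0 negb_or lexposN // andbT.
by apply: contraTneq pu => ->; exact: lexpos0.
Qed.

Lemma lexle_refl : reflexive (@lexle R p).
Proof. by move=> u; rewrite lexleE eqxx. Qed.

Lemma lexle_trans : transitive (@lexle R p).
Proof.
move=> v u w; rewrite !(lexle_subr _ v) !(lexle_subr _ w) => uv vw.
by have := lexge0D vw uv; rewrite addrA subrK.
Qed.

Lemma lexle_total : total (@lexle R p).
Proof.
move=> u v; rewrite lexle_subr [lexle v u]lexle_subr -[u - v]opprB !lexge0E oppr_eq0.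
have [->|uv] := eqVneq (v - u) 0; first by [].
by case/orP: (lexpos_total uv) => ->; rewrite ?orbT.
Qed.

Lemma lexge0_head w (k : 'I_p) : val k = 0%N -> lexle 0 w -> 0 <= w 0 k.
Proof.
move=> k0; rewrite lexge0E => /orP[/eqP->|/lexposP[l [w0 wl]]]; first by rewrite mxE.
have [l0|l_gt0] := posnP l; last by rewrite w0 // k0.
by rewrite (_ : k = l) ?ltW //; apply: val_inj; rewrite /= k0 l0.
Qed.

End LexOrder.

Lemma polytope_no_ray (R : realType) m n (A : 'M[R]_(m, n)) b x (d : 'cV[R]_n) :
  is_polytope A b -> in_polyhedron A b x -> (forall j, 0 <= (A *m d) j 0) -> d = 0.
Proof.
move=> [M HM] Px Ad_ge0; apply/matrixP => r c; rewrite (ord1 c) [RHS]mxE.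
apply/eqP/negPn/negP => dr_neq0.
pose t := (M + `|x r 0| + 1) / `|d r 0|.
have M_ge0 : 0 <= M by apply: le_trans (HM x Px r).
have t_ge0 : 0 <= t by rewrite divr_ge0 // !addr_ge0.
have Pxt : in_polyhedron A b (x + t *: d).
  move=> j; rewrite mulmxDr -scalemxAr mxE [X in _ + X]mxE.
  by rewrite (le_trans (Px j)) // lerDl mulr_ge0.
have td : `|t * d r 0| = M + `|x r 0| + 1.
  by rewrite normrM (ger0_norm t_ge0) divfK // normr_eq0.
have := HM _ Pxt r; rewrite !mxE.
have := ler_normB (x r 0 + t * d r 0) (x r 0); rewrite addrAC subrr add0r td.
move: (x r 0 + _) => y; lra.
Qed.

Lemma mulmx_colE (R : pzRingType) p q r (M : 'M[R]_(p, q)) (Y : 'M[R]_(q, r)) i c :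
  (M *m col c Y) i 0 = (M *m Y) i c.
Proof. by rewrite !mxE; apply: eq_bigr => l _; rewrite !mxE. Qed.

Lemma exists_setD_eqcard (T : finType) (I J : {set T}) :
  #|I| = #|J| -> I != J -> exists2 j, j \in J & j \notin I.
Proof.
move=> IJ_card IJ; apply/subsetPn; apply: contra IJ => JI.
by rewrite eq_sym eqEcard JI IJ_card leqnn.
Qed.

Lemma setD_eq_set1 (T : finType) (I J : {set T}) i :
  I :\: J = [set i] -> [/\ i \in I, i \notin J & I :\ i \subset J].
Proof.
move=> IJ; have : i \in I :\: J by rewrite IJ set11.
rewrite in_setD => /andP[iJ iI]; split=> //.
apply/subsetP => k; rewrite in_setD1 => /andP[ki kI]; apply: contraNT ki => kJ.
by rewrite -in_set1 -IJ in_setD kJ kI.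
Qed.

Section Bases.
Variables (R : realType) (m n : nat) (A : 'M[R]_(m, n)) (b : 'cV[R]_m).
Local Notation Bt := (btilde b).
Local Notation Mx := 'M[R]_(n, 1 + m).
Implicit Types (I J : {set 'I_m}) (X Y : Mx).

Lemma btilde_lshift i : Bt i (lshift m 0) = b i 0.
Proof. by rewrite /btilde row_mxEl. Qed.

Lemma btilde_rshift i j : Bt i (rshift 1 j) = - (i == j)%:R.
Proof. by rewrite /btilde row_mxEr !mxE. Qed.

Definition tight I X := forall i, i \in I -> row i (A *m X) = row i Bt.

Definition basic I X := [/\ #|I| = n, tight I X & lexge_mx (A *m X) Bt].

Definition slack X j := row j (A *m X) - row j Bt.

Definition edge_dir X i : 'cV[R]_n := - col (rshift 1 i) X.

Lemma tight_entry I X i c : tight I X -> i \in I -> (A *m X) i c = Bt i c.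
Proof. by move=> tX iI; have /rowP/(_ c) := tX i iI; rewrite !mxE. Qed.

Lemma tight_edge_dir I X i k : tight I X -> k \in I ->
  (A *m edge_dir X i) k 0 = (k == i)%:R.
Proof.
by move=> tX kI; rewrite mulmxN mxE mulmx_colE (tight_entry _ tX kI) btilde_rshift opprK.
Qed.

Definition basis_enum I (e : #|I| = n) (k : 'I_n) : 'I_m :=
  enum_val (cast_ord (esym e) k).

Lemma basis_enum_inj I (e : #|I| = n) : injective (basis_enum e).
Proof. by move=> k l /enum_val_inj /cast_ord_inj. Qed.

Lemma basis_enum_mem I (e : #|I| = n) k : basis_enum e k \in I.
Proof. exact: enum_valP. Qed.

Lemma basis_enum_surj I (e : #|I| = n) i : i \in I -> exists k, basis_enum e k = i.
Proof.
move=> iI; exists (cast_ord e (enum_rank_in iI i)).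
by rewrite /basis_enum cast_ordK enum_rankK_in.
Qed.

Lemma big_basis_enum I (e : #|I| = n) (V : zmodType) (F : 'I_m -> V) :
  \sum_(i in I) F i = \sum_(k < n) F (basis_enum e k).
Proof.
rewrite big_enum_val (reindex (cast_ord (esym e))) //.
by exists (cast_ord e) => k _; [exact: cast_ordKV | exact: cast_ordK].
Qed.

Lemma castmx_subrows I (e : #|I| = n) p (M : 'M[R]_(m, p)) :
  castmx (e, erefl p) (subrows I M) = rowsub (basis_enum e) M.
Proof. by apply/matrixP => k j; rewrite castmxE !mxE cast_ord_id. Qed.

(* Tightness on the [-Id] block of [btilde b] makes these columns of [X],
   negated, an inverse of [A_I]. *)
Definition edge_dirs I (e : #|I| = n) X : 'M[R]_n :=
  - colsub (fun k => rshift 1 (basis_enum e k)) X.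

Lemma mul_rowsub_edge_dirs I (e : #|I| = n) X : tight I X ->
  rowsub (basis_enum e) A *m edge_dirs e X = 1%:M.
Proof.
move=> tX; rewrite mulmxN -mxsub_mul; apply/matrixP => k l.
rewrite mxE [mxsub _ _ _ _ _]mxE [RHS]mxE (tight_entry _ tX (basis_enum_mem e k)).
by rewrite btilde_rshift (inj_eq (@basis_enum_inj I e)) opprK.
Qed.

Lemma basis_expansion I X p (Z : 'M[R]_(n, p)) : #|I| = n -> tight I X ->
  Z = \sum_(i in I) edge_dir X i *m row i (A *m Z).
Proof.
move=> e tX; have AD := mul_rowsub_edge_dirs e tX.
transitivity (edge_dirs e X *m (rowsub (basis_enum e) A *m Z)).
  by rewrite mulmxA (mulmx1C AD) mul1mx.
rewrite mul_rowsub_mx (big_basis_enum e); apply/matrixP => r c.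
rewrite summxE !mxE; apply: eq_bigr => k _.
by rewrite !mxE big_ord1 !mxE.
Qed.

Lemma basis_mx_eq0 I X p (Z : 'M[R]_(n, p)) : #|I| = n -> tight I X ->
  (forall i, i \in I -> row i (A *m Z) = 0) -> Z = 0.
Proof.
move=> e tX AZ0; rewrite (basis_expansion Z e tX).
by apply: big1 => i iI; rewrite AZ0 ?mulmx0.
Qed.

Lemma slack_eq0 X j : (slack X j == 0) = (row j (A *m X) == row j Bt).
Proof. exact: subr_eq0. Qed.

Lemma slack_entry X j c : slack X j 0 c = (A *m X) j c - Bt j c.
Proof. by rewrite /slack !mxE. Qed.

Lemma slack_tight I X j : tight I X -> j \in I -> slack X j = 0.
Proof. by move=> tX jI; apply/eqP; rewrite slack_eq0 tX. Qed.

Lemma slack_ge0 X j : lexge_mx (A *m X) Bt -> lexle 0 (slack X j).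
Proof. by rewrite -lexle_subr. Qed.

Lemma slackB X Y j : row j (A *m (X - Y)) = slack X j - slack Y j.
Proof. by rewrite /slack mulmxBr raddfB /= opprB addrA subrK. Qed.

Lemma row_mulmx_outer j (d : 'cV[R]_n) (l : 'rV[R]_(1 + m)) :
  row j (A *m (d *m l)) = (A *m d) j 0 *: l.
Proof. by apply/rowP => c; rewrite mulmxA !mxE big_ord1 !mxE. Qed.

Lemma slack_shift X (d : 'cV[R]_n) l j :
  slack (X + d *m l) j = slack X j + (A *m d) j 0 *: l.
Proof. by rewrite /slack mulmxDr raddfD /= row_mulmx_outer addrAC. Qed.

(* Lexicographic nondegeneracy: in the column of the slack variable [j],
   row [j] of [A *m X] vanishes while that of [btilde b] is [-1]. *)
Lemma slack_neq0 I X j : #|I| = n -> tight I X -> j \notin I -> slack X j != 0.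
Proof.
move=> e tX jI.
have col_j0 : col (rshift 1 j) X = 0.
  apply: (basis_mx_eq0 e tX) => i iI; apply/rowP => c.
  rewrite (ord1 c) [LHS]mxE mulmx_colE (tight_entry _ tX iI) btilde_rshift mxE.
  by rewrite (_ : (i == j) = false) ?oppr0 //; apply: contraNF jI => /eqP <-.
apply/eqP => /rowP/(_ (rshift 1 j)).
rewrite slack_entry -mulmx_colE col_j0 mulmx0 btilde_rshift eqxx !mxE opprK add0r.
by move/eqP; rewrite oner_eq0.
Qed.

Lemma basic_slack_pos I X j : basic I X -> j \notin I -> lexpos (slack X j).
Proof.
by case=> e tX fX jI; apply: lexge0_pos (slack_ge0 _ fX) (slack_neq0 e tX jI).
Qed.

Lemma basic_uniq I X Y : basic I X -> basic I Y -> X = Y.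
Proof.
move=> [e tX _] [_ tY _]; apply/eqP; rewrite -subr_eq0; apply/eqP.
apply: (basis_mx_eq0 e tX) => i iI.
by rewrite slackB (slack_tight tX iI) (slack_tight tY iI) subrr.
Qed.

Lemma lex_feasibleP I : lex_feasible A b I <-> exists X, basic I X.
Proof.
rewrite /lex_feasible; split=> [[e /=]|[X [e tX fX]]].
  rewrite !castmx_subrows => -[AI_unit fX].
  exists (invmx (rowsub (basis_enum e) A) *m rowsub (basis_enum e) Bt).
  split=> // i iI.
  have [k <-] := basis_enum_surj e iI.
  by rewrite -!row_rowsub -mul_rowsub_mx mulKVmx.
exists e; rewrite /= !castmx_subrows.
have [AI_unit _] := mulmx1_unit (mul_rowsub_edge_dirs e tX).
suff -> : rowsub (basis_enum e) Bt = rowsub (basis_enum e) A *m X by rewrite mulKmx.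
apply/row_matrixP => k; rewrite mul_rowsub_mx !row_rowsub tX //; exact: basis_enum_mem.
Qed.

Lemma lexge_in_polyhedron X : lexge_mx (A *m X) Bt ->
  in_polyhedron A b (col (lshift m 0) X).
Proof.
move=> fX i; rewrite mulmx_colE -btilde_lshift -subr_ge0 -slack_entry.
exact: lexge0_head (slack_ge0 _ fX).
Qed.

Lemma edge_dir_exit I X i : is_polytope A b -> basic I X -> i \in I ->
  exists j, (A *m edge_dir X i) j 0 < 0.
Proof.
move=> Pb [_ tX fX] iI.
case: (pickP (fun j => (A *m edge_dir X i) j 0 < 0)) => [j|Ad_ge0]; first by exists j.
have d0 : edge_dir X i = 0.
  by apply: (polytope_no_ray Pb (lexge_in_polyhedron fX)) => j; rewrite leNgt Ad_ge0.
have := tight_edge_dir i tX iI; rewrite d0 mulmx0 mxE eqxx.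
by move/eqP; rewrite eq_sym oner_eq0.
Qed.

Lemma card_exchange I i j : #|I| = n -> i \in I -> j \notin I -> #|j |: I :\ i| = n.
Proof.
by move=> e iI jI; rewrite cardsU1 in_setD1 (negbTE jI) andbF -e (cardsD1 i I) iI.
Qed.

Lemma lex_adj_exchange I i j : #|I| = n -> i \in I -> j \notin I ->
  lex_adj n I (j |: I :\ i).
Proof.
move=> e iI jI; rewrite /lex_adj -e (cardsD1 i I) iI add1n; congr (_.+1).
apply: eq_card => k; rewrite !inE.
have [->|_] := eqVneq k j; first by rewrite (negbTE jI) !andbF.
by case: (k \in I); rewrite /= ?andbT ?andbF.
Qed.

(* Lexicographic ratio test: among the rows decreasing along [edge_dir X i],
   [j] minimises [slack X j / (- a j)]; boundedness of the polytope ensures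
   that there is such a row. *)
Lemma pivot I X i : is_polytope A b -> basic I X -> i \in I ->
  exists j lam,
    [/\ j \notin I, lexpos lam & basic (j |: I :\ i) (X + edge_dir X i *m lam)].
Proof.
move=> Pb bX iI; have [e tX fX] := bX.
pose a j : R := (A *m edge_dir X i) j 0.
pose ratio j := (- a j)^-1 *: slack X j.
have [j0 aj0] := edge_dir_exit Pb bX iI.
have [j aj jmin] :=
  @extremumP _ _ _ j0 (fun j => a j < 0) ratio
    (@lexle_refl _ _) (@lexle_trans _ _) (@lexle_total _ _) aj0.
have ratioK k : a k < 0 -> (- a k) *: ratio k = slack X k.
  by move=> ak; rewrite scalerA mulfV ?scale1r // oppr_eq0 lt_eqF.
have aI k : k \in I -> a k = (k == i)%:R by exact: tight_edge_dir.
have jI : j \notin I by apply: contraTN aj => /aI ->; rewrite -leNgt ler0n.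
have lam_pos : lexpos (ratio j).
  by rewrite lexposZ ?invr_gt0 ?oppr_gt0 // (basic_slack_pos bX jI).
have slack' k : slack (X + edge_dir X i *m ratio j) k = slack X k + a k *: ratio j.
  exact: slack_shift.
exists j, (ratio j); split=> //; split; first exact: card_exchange.
  move=> k; rewrite in_setU1 in_setD1 => kI'; apply/eqP; rewrite -slack_eq0 slack'.
  case/predU1P: kI' => [->|/andP[ki kI]].
    by rewrite -{1}(ratioK j aj) -scalerDl addNr scale0r.
  by rewrite aI // (negbTE ki) scale0r addr0 (slack_tight tX kI).
move=> k; rewrite lexle_subr -/(slack _ k) slack'.
have [a_ge0|a_lt0] := leP 0 (a k).
  by rewrite lexge0D ?(slack_ge0 _ fX) // lexge0Z // lexpos_ge0.
have -> : slack X k + a k *: ratio j = (- a k) *: (ratio k - ratio j).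
  by rewrite -(ratioK k a_lt0) scalerBr !scaleNr opprK.
by rewrite lexge0Z ?oppr_ge0 ?ltW // -lexle_subr jmin.
Qed.

Definition cost J X := \sum_(j in J) slack X j.

Definition reduced_cost J X i := \sum_(j in J) (A *m edge_dir X i) j 0.

Lemma cost_tight J X : tight J X -> cost J X = 0.
Proof. by move=> tX; apply: big1 => j jJ; rewrite (slack_tight tX jJ). Qed.

Lemma cost_pos I X J : basic I X -> #|J| = n -> I != J -> lexpos (cost J X).
Proof.
move=> bX eJ IJ; have [eI _ fX] := bX.
have [j jJ jI] := exists_setD_eqcard (etrans eI (esym eJ)) IJ.
rewrite /cost (bigD1 j) //=; apply: lexposD_ge0; first exact: basic_slack_pos bX jI.
by apply: lexge0_sum => k _; apply: slack_ge0.
Qed.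

Lemma cost_shift J X (d : 'cV[R]_n) l :
  cost J (X + d *m l) = cost J X + (\sum_(j in J) (A *m d) j 0) *: l.
Proof.
by rewrite /cost scaler_suml -big_split; apply: eq_bigr => j _; exact: slack_shift.
Qed.

(* [cost J] vanishes at [J] and is lex-positive at every other basis, whereas
   nonnegative reduced costs at [X] would make [cost J X] lex-nonpositive. *)
Lemma reduced_cost_neg I X J Y : basic I X -> basic J Y -> I != J ->
  exists2 i, i \in I & reduced_cost J X i < 0.
Proof.
move=> bX bY IJ; have [eI tX _] := bX; have [eJ tY fY] := bY.
case: (pickP (fun i => (i \in I) && (reduced_cost J X i < 0))) => [i /andP[]|rc_ge0].
  by exists i.
have X_Y : X - Y = \sum_(i in I) edge_dir X i *m - slack Y i.
  rewrite {1}(basis_expansion (X - Y) eI tX); apply: eq_bigr => i iI.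
  by rewrite slackB (slack_tight tX iI) sub0r.
have costE : cost J X = \sum_(i in I) reduced_cost J X i *: - slack Y i.
  rewrite -[cost J X]subr0 -[Z in _ - Z](cost_tight tY) /cost -sumrB.
  under eq_bigr do rewrite -slackB X_Y mulmx_sumr raddf_sum /=.
  rewrite exchange_big; apply: eq_bigr => i _; rewrite /reduced_cost scaler_suml.
  by apply: eq_bigr => j _; rewrite row_mulmx_outer.
exfalso; apply: (negP (lexposN_ge0 (cost_pos bX eJ IJ))).
rewrite costE -sumrN; apply: lexge0_sum => i iI.
rewrite scalerN opprK lexge0Z ?(slack_ge0 _ fY) //.
by rewrite leNgt; move: (rc_ge0 i); rewrite /= iI /= => ->.
Qed.

Lemma pivot_descent I X J Y : is_polytope A b -> basic I X -> basic J Y -> I != J ->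
  exists I' X', [/\ basic I' X', lex_adj n I I' & lexpos (cost J X - cost J X')].
Proof.
move=> Pb bX bY IJ; have [i iI rc_neg] := reduced_cost_neg bX bY IJ.
have [j [lam [jI lam_pos bX']]] := pivot Pb bX iI.
exists (j |: I :\ i), (X + edge_dir X i *m lam); split=> //.
  by apply: lex_adj_exchange => //; case: bX.
by rewrite cost_shift opprD addrA subrr add0r -scaleNr lexposZ // oppr_gt0.
Qed.

Lemma tight_on_edge I X I' X' i : #|I| = n -> tight I X -> tight I' X' -> i \in I ->
  I :\ i \subset I' -> X' = X + edge_dir X i *m slack X' i.
Proof.
move=> e tX tX' iI sub; have := basis_expansion (X' - X) e tX.
rewrite (bigD1 i) //= big1 ?addr0 => [|k /andP[kI ki]].
  by rewrite slackB (slack_tight tX iI) subr0 => /eqP; rewrite subr_eq addrC => /eqP.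
have kI' : k \in I' by rewrite (subsetP sub) // in_setD1 ki.
by rewrite slackB (slack_tight tX' kI') (slack_tight tX kI) subrr mulmx0.
Qed.

Lemma exchange_slack_lt I X I1 X1 I2 X2 i j :
  basic I X -> basic I1 X1 -> basic I2 X2 ->
  I :\: I1 = [set i] -> I :\: I2 = [set i] -> j \in I2 -> j \notin I1 ->
  lexpos (slack X2 i - slack X1 i).
Proof.
move=> bX bX1 bX2 /setD_eq_set1[iI iI1 sub1] /setD_eq_set1[_ iI2 sub2] jI2 jI1.
have [e tX _] := bX; have [_ tX1 _] := bX1; have [_ tX2 _] := bX2.
have jI : j \notin I.
  apply: contraNN jI1 => jI; apply: (subsetP sub1); rewrite in_setD1 jI andbT.
  by apply: contraNneq iI2 => <-.
set a := (A *m edge_dir X i) j 0.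
have slack_j K XK : tight K XK -> I :\ i \subset K ->
    slack XK j = slack X j + a *: slack XK i.
  by move=> tK sub; rewrite {1}(tight_on_edge e tX tK iI sub) slack_shift.
have s2 : slack X j + a *: slack X2 i = 0.
  by rewrite -(slack_j _ _ tX2 sub2) (slack_tight tX2 jI2).
have s1 : lexpos (slack X j + a *: slack X1 i).
  by rewrite -(slack_j _ _ tX1 sub1) (basic_slack_pos bX1 jI1).
have a_lt0 : a < 0.
  rewrite ltNge; apply/negP => a_ge0; move: (lexpos0 R (1 + m)); rewrite -s2.
  rewrite lexposD_ge0 ?(basic_slack_pos bX jI) // lexge0Z //.
  exact/lexpos_ge0/(basic_slack_pos bX2 iI2).
have na_gt0 : 0 < - a by rewrite oppr_gt0.
rewrite -(lexposZ _ na_gt0).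
have -> : (- a) *: (slack X2 i - slack X1 i) =
    (slack X j + a *: slack X1 i) - (slack X j + a *: slack X2 i).
  rewrite [in RHS]opprD [in RHS]addrACA [slack X j - _]subrr add0r.
  by rewrite scalerBr !scaleNr opprK addrC.
by rewrite s2 subr0.
Qed.

Lemma exchange_uniq I X I1 X1 I2 X2 i : basic I X -> basic I1 X1 -> basic I2 X2 ->
  I :\: I1 = [set i] -> I :\: I2 = [set i] -> I1 = I2.
Proof.
move=> bX bX1 bX2 E1 E2; apply/eqP; apply: contraT => I12.
have [[e1 _ _] [e2 _ _]] := (bX1, bX2).
have [j jI2 jI1] := exists_setD_eqcard (etrans e1 (esym e2)) I12.
have I21 : I2 != I1 by rewrite eq_sym.
have [k kI1 kI2] := exists_setD_eqcard (etrans e2 (esym e1)) I21.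
have := exchange_slack_lt bX bX2 bX1 E2 E1 kI1 kI2.
by rewrite -opprB (negbTE (lexposN (exchange_slack_lt bX bX1 bX2 E1 E2 jI2 jI1))).
Qed.

Lemma card_adj_bases I X (T : {set {set 'I_m}}) : basic I X ->
  (forall I', I' \in T -> lex_adj n I I' /\ exists X', basic I' X') -> (#|T| <= n)%N.
Proof.
move=> bX adjT; have [eI _ _] := bX.
have single I' : I' \in T -> exists2 i, i \in I & I :\: I' = [set i].
  move=> /adjT[adj _]; have /cards1P[i Ei] : #|I :\: I'| == 1%N.
    by have := cardsID I' I; rewrite eI -adj -addn1 => /eqP; rewrite eqn_add2l.
  by exists i => //; have := set11 i; rewrite -Ei in_setD => /andP[].
have injT : {in T &, injective (fun I' => I :\: I')}.
  move=> I1 I2 T1 T2 E12; have [i _ E1] := single _ T1.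
  have [[_ [X1 bX1]] [_ [X2 bX2]]] := (adjT _ T1, adjT _ T2).
  exact: exchange_uniq bX bX1 bX2 E1 (etrans (esym E12) E1).
rewrite -(card_in_imset injT) -eI -(card_imset I (@set1_inj _)).
apply: subset_leq_card; apply/subsetP => _ /imsetP[I' /single[i iI ->] ->].
exact: imset_f.
Qed.

End Bases.

Section LexGraph.
Variables (R : realType) (m n : nat) (A : 'M[R]_(m, n)) (b : 'cV[R]_m).
Variables (V : finType) (x : V -> {set 'I_m} * 'M[R]_(n, 1 + m)).
Hypothesis basic_x : forall v, basic A b (x v).1 (x v).2.

(* The [n] neighbours of [v] inject into the at most [n] lex-neighbours of
   its basis, so they exhaust them. *)
Lemma lex_adj_edge (e : rel V) :
  injective (fun v => (x v).1) -> (forall v, #|[set w | e v w]| = n) ->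
  (forall v w, e v w -> lex_adj n (x v).1 (x w).1) ->
  forall v I' X', basic A b I' X' -> lex_adj n (x v).1 I' ->
  exists2 w, e v w & (x w).1 = I'.
Proof.
move=> inj_x deg adj v I' X' bX' adjI'.
pose N := [set (x w).1 | w in [set w | e v w]].
case: (boolP (I' \in N)) => [/imsetP[w]|I'N]; first by rewrite inE => vw ->; exists w.
exfalso; suff : (#|I' |: N| <= n)%N.
  by rewrite cardsU1 I'N (card_imset _ inj_x) deg add1n ltnn.
apply: (card_adj_bases (basic_x v)) => K.
rewrite in_setU1 => /predU1P[->|/imsetP[w]]; first by split; last exists X'.
by rewrite inE => vw ->; split; [exact: adj | exists (x w).2].
Qed.

(* A member of the family minimising [cost J] is [J]: otherwise a simplex
   pivot would lead to an adjacent member with smaller cost. *)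
Lemma lex_graph_connected (v0 : V) : is_polytope A b ->
  (forall v I' X', basic A b I' X' -> lex_adj n (x v).1 I' -> exists w, (x w).1 = I') ->
  forall J Y, basic A b J Y -> exists v, (x v).1 = J.
Proof.
move=> Pb closed J Y bY.
have [v _ vmin] := @extremumP _ _ _ v0 predT (fun v => cost A b J (x v).2)
  (@lexle_refl _ _) (@lexle_trans _ _) (@lexle_total _ _) isT.
have [<-|vJ] := eqVneq (x v).1 J; first by exists v.
have [I' [X' [bX' adj descent]]] := pivot_descent Pb (basic_x v) bY vJ.
have [w xw] := closed v I' X' bX' adj.
have X'w : X' = (x w).2 by apply: (basic_uniq bX'); rewrite -xw; exact: basic_x.
move: (vmin w isT).
by rewrite lexle_subr -X'w -opprB (negbTE (lexposN_ge0 descent)).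
Qed.

End LexGraph.

Theorem mainTheorem6 (R : realType) (m n : nat)
  (A : 'M[R]_(m, n)) (b : 'cV[R]_m)
  (V : finType) (lab : V -> {set 'I_m} * 'M[R]_(n, 1 + m)) (e : rel V) :
  is_polytope A b ->
  injective lab ->
  symmetric e ->
  (exists v : V, True) ->
  (forall v : V, #|(lab v).1| = n) ->
  (forall v : V, forall i : 'I_m, i \in (lab v).1 ->
     row i (A *m (lab v).2) = row i (btilde b)) ->
  (forall v : V, lexge_mx (A *m (lab v).2) (btilde b)) ->
  (forall v : V, #|[set w | e v w]| = n) ->
  (forall v w : V, e v w -> lex_adj n (lab v).1 (lab w).1) ->
  (forall v : V, lex_feasible A b (lab v).1) /\
  injective (fun v : V => (lab v).1) /\
  (forall I : {set 'I_m}, lex_feasible A b I -> exists v : V, (lab v).1 = I) /\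
  (forall v w : V, e v w <-> lex_adj n (lab v).1 (lab w).1).
Proof.
move=> Pb inj_lab _ [v0 _] card_lab tight_lab lexge_lab deg adj.
have basic_lab v : basic A b (lab v).1 (lab v).2.
  by split; [exact: card_lab | exact: tight_lab | exact: lexge_lab].
have inj1 : injective (fun v => (lab v).1).
  move=> v w /= vw; apply: inj_lab.
  rewrite [lab v]surjective_pairing [lab w]surjective_pairing vw.
  by have := basic_lab w; rewrite -vw => /(basic_uniq (basic_lab v)) ->.
have nbr := lex_adj_edge basic_lab inj1 deg adj.
split; first by move=> v; apply/lex_feasibleP; exists (lab v).2.
split; first exact: inj1.
split.
  move=> I /lex_feasibleP[X bX]; apply: (lex_graph_connected basic_lab v0 Pb _ bX).
  by move=> v I' X' bX' /(nbr v _ _ bX')[w _ <-]; exists w.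
move=> v w; split; first exact: adj.
by move=> /(nbr v _ _ (basic_lab w))[w' vw' /inj1 <-].
Qed.
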